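(* Let $(\mathscr C,A,\psi)$ be an entwining structure. Then the functor $F_\psi:Com^{\mathscr C}\to Com^{\mathscr C}_A(\psi)$, $F_\psi(\mathcal M)=\mathcal M\otimes A$, is separable if and only if there exists $\sigma\in V_1$ such that $\sigma_X(f\otimes1)=\epsilon_X(f)$ for all $f\in\mathscr C(X,X)$ and all $X\in Ob(\mathscr C)$.
   Context: $K$ is a field. A $K$-coalgebra with several objects $\mathscr C$: a set $Ob(\mathscr C)$, vector spaces $\mathscr C(X,Y)$, linear comultiplications $\delta_{XYZ}:\mathscr C(X,Z)\to\mathscr C(Y,Z)\otimes\mathscr C(X,Y)$, $\delta_{XYZ}(f)=f_{Y1}\otimes f_{Y2}$, and counits $\epsilon_X:\mathscr C(X,X)\to K$, with $(\delta_{YWZ}\otimes\mathrm{id})\delta_{XYZ}=(\mathrm{id}\otimes\delta_{XYW})\delta_{XWZ}$ and $(\epsilon_Y\otimes\mathrm{id})\delta_{XYY}=\mathrm{id}=(\mathrm{id}\otimes\epsilon_X)\delta_{XXY}$. For a $K$-algebra $A$ (multiplication $\mu_A$), an entwining structure $(\mathscr C,A,\psi)$ is a family of linear maps $\psi_{XY}:\mathscr C(X,Y)\otimes A\to A\otimes\mathscr C(X,Y)$, $\psi_{XY}(f\otimes a)=a_\psi\otimes f^\psi$, with (i) $(\mathrm{id}_A\otimes\delta_{XYZ})\psi_{XZ}=(\psi_{YZ}\otimes\mathrm{id})(\mathrm{id}\otimes\psi_{XY})(\delta_{XYZ}\otimes\mathrm{id}_A)$; (ii) $\psi_{XZ}(\mathrm{id}\otimes\mu_A)=(\mu_A\otimes\mathrm{id})(\mathrm{id}_A\otimes\psi_{XZ})(\psi_{XZ}\otimes\mathrm{id}_A)$;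 (iii) $\psi_{XZ}(f\otimes1)=1\otimes f$; (iv) $\epsilon_Z(g^\psi)a_\psi=\epsilon_Z(g)a$. $Com^{\mathscr C}$: right $\mathscr C$-comodules (spaces $\mathcal M(X)$, coactions $\rho_{XY}(m)=m_{Y0}\otimes m_{Y1}\in\mathcal M(Y)\otimes\mathscr C(X,Y)$ with $(\rho_{ZY}\otimes\mathrm{id})\rho_{XZ}=(\mathrm{id}\otimes\delta_{XZY})\rho_{XY}$, $(\mathrm{id}\otimes\epsilon_X)\rho_{XX}=\mathrm{id}$) with coaction-compatible linear families as morphisms. $Com^{\mathscr C}_A(\psi)$: entwined comodules (comodules with right $A$-module structures on each $\mathcal M(X)$ such that $\rho_{XY}(ma)=m_{Y0}a_\psi\otimes(m_{Y1})^\psi$) with $A$-linear comodule morphisms. $F_\psi(\mathcal M)(X)=\mathcal M(X)\otimes A$ with $(m\otimes a)b=m\otimes ab$ and coaction $m\otimes a\mapsto m_{Y0}\otimes a_\psi\otimes(m_{Y1})^\psi$; $F_\psi(\phi)=\phi\otimes\mathrm{id}_A$. $V_1$ is the space of families $\sigma=\{\sigma_X:\mathscr C(X,X)\otimes A\to K\}_{X}$ of linear maps with $\sigma_Y(f_{Y1}\otimes a_\psi)f_{Y2}^\psi=\sigma_X(f_{X2}\otimes a)f_{X1}$ for all $f\in\mathscr C(X,Y)$, $a\in A$, where $a_\psi\otimes f_{Y2}^\psi=\psi_{XY}(f_{Y2}\otimes a)$. A functor $F:\mathcal D\to\mathcal D'$ is separable if the natural transformation $\mathcal D(-,-)\to\mathcal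 D'(F-,F-)$, $\phi\mapsto F(\phi)$, has a natural left inverse. *)

From HB Require Import structures.
From mathcomp Require Import all_boot all_order all_algebra.
From mathcomp Require Import generic_quotient boolp.

Set Implicit Arguments.
Unset Strict Implicit.
Unset Printing Implicit Defensive.

Import GRing.Theory.
Local Open Scope ring_scope.
Local Open Scope quotient_scope.

(* Algebraic tensor product U (x) V of two K-vector spaces, built as the      *)
(* quotient of finite formal sums  sum_i u_i (x) v_i  (lists of pairs) by the *)
(* relation "equal under every K-bilinear map into every K-vector space".     *)
Section Tensor.
Variable K : fieldType.
Variables U V : lmodType K.

Definition bilin (W : lmodType K) (b : U -> V -> W) : Prop :=
  (forall u, linear (b u)) /\ (forall v, linear (b^~ v)).

Definition tsum (W : lmodType K) (b : U -> V -> W) (s : seq (U * V)) : W :=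
  \sum_(p <- s) b p.1 p.2.

Definition teq (s t : seq (U * V)) : Prop :=
  forall (W : lmodType K) (b : U -> V -> W), bilin b -> tsum b s = tsum b t.

Definition teqb (s t : seq (U * V)) : bool := `[< teq s t >].

Lemma teqb_refl : reflexive teqb.
Proof. by move=> s; apply/asboolP. Qed.

Lemma teqb_sym : symmetric teqb.
Proof.
by move=> s t; apply/asboolP/asboolP => h W b hb; rewrite h.
Qed.

Lemma teqb_trans : transitive teqb.
Proof.
move=> t s u /asboolP h1 /asboolP h2; apply/asboolP => W b hb.
by rewrite h1 // h2.
Qed.

Canonical teqb_equiv := EquivRel teqb teqb_refl teqb_sym teqb_trans.

Definition tens := {eq_quot teqb}.
HB.instance Definition _ := Choice.on tens.
HB.instance Definition _ := EqQuotient.on tens.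

Definition tpi (s : seq (U * V)) : tens := \pi_tens s.

Lemma tpiP s t : teq s t -> tpi s = tpi t.
Proof. by move=> h; apply/eqmodP/asboolP. Qed.

Lemma tpi_repr (x : tens) : teq (repr x) (repr x).
Proof. by []. Qed.

Lemma teq_repr s : teq (repr (tpi s)) s.
Proof.
have := reprK (tpi s); rewrite /tpi => /eqmodP /asboolP; exact.
Qed.

Lemma linZ_aux (W W' : lmodType K) (f : W -> W') :
  linear f -> forall a u, f (a *: u) = a *: f u.
Proof.
move=> hf a u.
have f0 : f 0 = 0.
  have := hf 1 0 0; rewrite !scale1r addr0.
  by move/(congr1 (fun z => z - f 0)); rewrite addrK subrr => /esym.
by have := hf a u 0; rewrite addr0 f0 addr0.
Qed.

Definition tscl (a : K) (s : seq (U * V)) := [seq (a *: p.1, p.2) | p <- s].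

Lemma tsum_cat (W : lmodType K) (b : U -> V -> W) s t :
  tsum b (s ++ t) = tsum b s + tsum b t.
Proof. by rewrite /tsum big_cat. Qed.

Lemma tsum_scl (W : lmodType K) (b : U -> V -> W) a s :
  bilin b -> tsum b (tscl a s) = a *: tsum b s.
Proof.
move=> [_ hr]; rewrite /tsum big_map scaler_sumr; apply: eq_bigr => p _ /=.
by rewrite (linZ_aux (hr p.2)).
Qed.

Lemma teq_cat s s' t t' : teq s s' -> teq t t' -> teq (s ++ t) (s' ++ t').
Proof. by move=> h1 h2 W b hb; rewrite !tsum_cat h1 // h2. Qed.

Lemma teq_scl a s s' : teq s s' -> teq (tscl a s) (tscl a s').
Proof. by move=> h W b hb; rewrite !tsum_scl // h. Qed.

Definition tzero : tens := tpi [::].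
Definition tadd (x y : tens) : tens := tpi (repr x ++ repr y).
Definition tscale (a : K) (x : tens) : tens := tpi (tscl a (repr x)).
Definition topp (x : tens) : tens := tscale (-1) x.

Lemma tensE (x : tens) : x = tpi (repr x).
Proof. by rewrite /tpi reprK. Qed.

Lemma tpi_eq (x y : tens) : teq (repr x) (repr y) -> x = y.
Proof. by move=> h; rewrite (tensE x) (tensE y); apply: tpiP. Qed.

Lemma tsum_repr (W : lmodType K) (b : U -> V -> W) s :
  bilin b -> tsum b (repr (tpi s)) = tsum b s.
Proof. by move=> hb; rewrite teq_repr. Qed.

Ltac tsimp := repeat (rewrite ?tsum_repr // ?tsum_cat // ?tsum_scl //).

Lemma taddA : associative tadd.
Proof.
move=> x y z; apply: tpi_eq => W b hb; rewrite /tadd /topp /tscale /tzero.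
by tsimp; rewrite addrA.
Qed.

Lemma taddC : commutative tadd.
Proof.
move=> x y; apply: tpi_eq => W b hb; rewrite /tadd /topp /tscale /tzero.
by tsimp; rewrite addrC.
Qed.

Lemma tadd0 : left_id tzero tadd.
Proof.
move=> x; apply: tpi_eq => W b hb; rewrite /tadd /topp /tscale /tzero.
by tsimp; rewrite /tsum big_nil add0r.
Qed.

Lemma taddN : left_inverse tzero topp tadd.
Proof.
move=> x; apply: tpi_eq => W b hb; rewrite /tadd /topp /tscale /tzero.
by tsimp; rewrite /tsum big_nil scaleN1r addNr.
Qed.

HB.instance Definition _ := GRing.isZmodule.Build tens taddA taddC tadd0 taddN.

Lemma tscaleA a b (x : tens) : tscale a (tscale b x) = tscale (a * b) x.
Proof.
apply: tpi_eq => W c hc; rewrite /tadd /topp /tscale /tzero.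
by tsimp; rewrite scalerA.
Qed.

Lemma tscale1 : left_id 1 tscale.
Proof.
move=> x; apply: tpi_eq => W c hc; rewrite /tadd /topp /tscale /tzero.
by tsimp; rewrite scale1r.
Qed.

Lemma tscaleDr : right_distributive tscale tadd.
Proof.
move=> a x y; apply: tpi_eq => W c hc; rewrite /tadd /topp /tscale /tzero.
by tsimp; rewrite scalerDr.
Qed.

Lemma tscaleDl (x : tens) : {morph tscale^~ x : a b / a + b >-> tadd a b}.
Proof.
move=> a b; apply: tpi_eq => W c hc; rewrite /tadd /topp /tscale /tzero.
by tsimp; rewrite scalerDl.
Qed.

HB.instance Definition _ :=
  GRing.Zmodule_isLmodule.Build K tens tscaleA tscale1 tscaleDr tscaleDl.

Definition tpure (u : U) (v : V) : tens := tpi [:: (u, v)].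

Definition tlift (W : lmodType K) (b : U -> V -> W) (x : tens) : W :=
  tsum b (repr x).

End Tensor.

Arguments tpure {K U V}.
Notation "u '(x)' v" := (tpure u v) (at level 40, left associativity).

Section TensorMaps.
Variable K : fieldType.

Definition tmap (U V U' V' : lmodType K) (f : U -> U') (g : V -> V')
  (x : tens U V) : tens U' V' :=
  tlift (fun u v => f u (x) g v) x.

Definition tassoc (U V W : lmodType K) (x : tens (tens U V) W) : tens U (tens V W) :=
  tlift (fun (y : tens U V) (w : W) => tlift (fun u v => u (x) (v (x) w)) y) x.

Definition tassocV (U V W : lmodType K) (x : tens U (tens V W)) : tens (tens U V) W :=
  tlift (fun (u : U) (y : tens V W) => tlift (fun v w => (u (x) v) (x) w) y) x.

End TensorMaps.

Unset Implicit Arguments.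
Section Entwining.
Variable K : fieldType.
Variable Ob : Type.
Variable C : Ob -> Ob -> lmodType K.
Variable delta : forall X Y Z : Ob, C X Z -> tens (C Y Z) (C X Y).
Variable eps : forall X : Ob, C X X -> K.
Variable A : algType K.
Variable psi : forall X Y : Ob, tens (C X Y) A -> tens A (C X Y).

Definition coalg_so : Prop :=
  [/\ (forall X Y Z, linear (delta X Y Z)),
      (forall X, scalar (eps X)),
      (* (delta_YWZ (x) id) delta_XYZ = (id (x) delta_XYW) delta_XWZ *)
      (forall X Y W Z (f : C X Z),
         tassoc (tmap (delta Y W Z) id (delta X Y Z f))
         = tmap id (delta X Y W) (delta X W Z f)),
      (forall X Y (f : C X Y),
         tlift (fun (g : C Y Y) (h : C X Y) => eps Y g *: h) (delta X Y Y f) = f) &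
      (forall X Y (f : C X Y),
         tlift (fun (h : C X Y) (g : C X X) => eps X g *: h) (delta X X Y f) = f)].

Definition mulA : tens A A -> A := tlift (fun a b : A => a * b).

Definition entwining : Prop :=
  [/\ (forall X Y, linear (psi X Y)),
      (* (i) (id_A (x) delta_XYZ) psi_XZ
             = (psi_YZ (x) id)(id (x) psi_XY)(delta_XYZ (x) id_A) *)
      (forall X Y Z (t : tens (C X Z) A),
         tmap id (delta X Y Z) (psi X Z t)
         = tassoc (tmap (psi Y Z) id
             (tassocV (tmap id (psi X Y) (tassoc (tmap (delta X Y Z) id t)))))),
      (* (ii) psi_XZ (id (x) mu_A) = (mu_A (x) id)(id_A (x) psi_XZ)(psi_XZ (x) id_A) *)
      (forall X Z (t : tens (C X Z) (tens A A)),
         psi X Z (tmap id mulA t)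
         = tmap mulA id
             (tassocV (tmap id (psi X Z) (tassoc (tmap (psi X Z) id (tassocV t)))))),
      (forall X Z (f : C X Z), psi X Z (f (x) 1) = 1 (x) f) &
      (* (iv) eps_Z(g^psi) a_psi = eps_Z(g) a *)
      (forall Z (g : C Z Z) (a : A),
         tlift (fun (a' : A) (g' : C Z Z) => eps Z g' *: a') (psi Z Z (g (x) a))
         = eps Z g *: a)].

Definition is_comod (M : Ob -> lmodType K)
    (rho : forall X Y, M X -> tens (M Y) (C X Y)) : Prop :=
  [/\ (forall X Y, linear (rho X Y)),
      (* (rho_ZY (x) id) rho_XZ = (id (x) delta_XZY) rho_XY *)
      (forall X Z Y (m : M X),
         tassoc (tmap (rho Z Y) id (rho X Z m)) = tmap id (delta X Z Y) (rho X Y m)) &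
      (forall X (m : M X),
         tlift (fun (n : M X) (g : C X X) => eps X g *: n) (rho X X m) = m)].

Record comod := Comod {
  cM : Ob -> lmodType K;
  crho : forall X Y, cM X -> tens (cM Y) (C X Y);
  crho_ax : is_comod cM crho }.

Definition is_comod_hom (M N : comod) (phi : forall X, cM M X -> cM N X) : Prop :=
  (forall X, linear (phi X)) /\
  (forall X Y (m : cM M X), crho N X Y (phi X m) = tmap (phi Y) id (crho M X Y m)).

Definition is_entw_comod (E : Ob -> lmodType K)
    (rho : forall X Y, E X -> tens (E Y) (C X Y)) (act : forall X, E X -> A -> E X) :
    Prop :=
  [/\ is_comod E rho,
      (forall X, bilin (act X)),
      (forall X (m : E X) (a b : A), act X (act X m a) b = act X m (a * b)),
      (forall X (m : E X), act X m 1 = m) &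
      (* rho_XY (m a) = m_Y0 a_psi (x) (m_Y1)^psi *)
      (forall X Y (m : E X) (a : A),
         rho X Y (act X m a)
         = tmap (fun p => tlift (act Y) p) id
             (tassocV (tmap id (psi X Y) (tassoc (rho X Y m (x) a)))))].

Definition is_entw_hom (E E' : Ob -> lmodType K)
    (rho : forall X Y, E X -> tens (E Y) (C X Y))
    (rho' : forall X Y, E' X -> tens (E' Y) (C X Y))
    (act : forall X, E X -> A -> E X) (act' : forall X, E' X -> A -> E' X)
    (g : forall X, E X -> E' X) : Prop :=
  [/\ (forall X, linear (g X)),
      (forall X (m : E X) (a : A), g X (act X m a) = act' X (g X m) a) &
      (forall X Y (m : E X), rho' X Y (g X m) = tmap (g Y) id (rho X Y m))].

Arguments cM : clear implicits.
Arguments crho : clear implicits.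

Definition FM (M : comod) (X : Ob) : lmodType K := tens (cM M X) A.

Definition Frho (M : comod) (X Y : Ob) (x : FM M X) : tens (FM M Y) (C X Y) :=
  tassocV (tmap id (psi X Y) (tassoc (tmap (crho M X Y) id x))).

Definition Fact (M : comod) (X : Ob) (x : FM M X) (b : A) : FM M X :=
  tmap id (fun a : A => a * b) x.

Definition Fmap (M N : comod) (phi : forall X, cM M X -> cM N X) (X : Ob) :
    FM M X -> FM N X :=
  tmap (phi X) id.

Definition is_Fhom (M N : comod) (g : forall X, FM M X -> FM N X) : Prop :=
  is_entw_hom (FM M) (FM N) (Frho M) (Frho N) (Fact M) (Fact N) g.

(* F_psi is separable: the natural transformation
   Hom_{Com^C}(-,-) -> Hom_{Com^C_A(psi)}(F_psi -, F_psi -), phi |-> F_psi(phi),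
   has a natural left inverse P. *)
Definition Fpsi_separable : Prop :=
  exists P : forall (M N : comod) (g : forall X, FM M X -> FM N X),
               is_Fhom M N g -> forall X, cM M X -> cM N X,
    [/\
        (forall M N g (hg : is_Fhom M N g), is_comod_hom M N (P M N g hg)),
        (forall M N (phi : forall X, cM M X -> cM N X) (hphi : is_comod_hom M N phi)
                (hF : is_Fhom M N (Fmap M N phi)),
           forall X (m : cM M X), P M N (Fmap M N phi) hF X m = phi X m) &
        (* naturality in both variables:
           P (F beta o g o F alpha) = beta o P g o alpha *)
        (forall M' M N N' (alpha : forall X, cM M' X -> cM M X)
                (beta : forall X, cM N X -> cM N' X)
                (g : forall X, FM M X -> FM N X) (hg : is_Fhom M N g),
           is_comod_hom M' M alpha -> is_comod_hom N N' beta ->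
           forall hc : is_Fhom M' N' (fun X x => Fmap N N' beta X (g X (Fmap M' M alpha X x))),
           forall X (m : cM M' X),
             P M' N' _ hc X m = beta X (P M N g hg X (alpha X m)))].

Definition inV1 (sigma : forall X, tens (C X X) A -> K) : Prop :=
  (forall X, scalar (sigma X)) /\
  (* sigma_Y(f_Y1 (x) a_psi) f_Y2^psi = sigma_X(f_X2 (x) a) f_X1 *)
  (forall X Y (f : C X Y) (a : A),
     tlift (fun (s : tens (C Y Y) A) (h : C X Y) => sigma Y s *: h)
       (tassocV (tmap id (psi X Y) (tassoc (delta X Y Y f (x) a))))
     = tlift (fun (f1 : C X Y) (f2 : C X X) => sigma X (f2 (x) a) *: f1)
         (delta X X Y f)).

End Entwining.

(* Sufficiency: given sigma, every comodule M carries the map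
   nu_M : M (x) A -> M, m (x) a |-> sigma_X(m_1 (x) a) m_0.  It is natural in M, it retracts
   m |-> m (x) 1 because sigma_X(f (x) 1) = eps_X(f), and it is a comodule map precisely
   because sigma lies in V_1; so g |-> nu_N o g o (- (x) 1) is a natural left inverse of F_psi.
   Necessity: a natural left inverse P, applied to the counit (m (x) a) (x) b |-> m (x) ab of
   the adjunction F_psi -| U, gives natural comodule retractions nu_M of m |-> m (x) 1.  Put
   sigma_X := eps_X o nu_{C(-,X)}.  Naturality of nu along the comodule maps
   M -> M(X) (x) C(-,X), m |-> m_0 (x) m_1, and C(-,X) -> M(X) (x) C(-,X), c |-> m (x) c,
   forces nu_M(m (x) a) = sigma_X(m_1 (x) a) m_0, and then the fact that nu_{C(-,Y)} is a
   comodule map is exactly the V_1 condition. *)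

From Pilot Require Import Defs.
From mathcomp Require Import all_boot all_algebra.
From mathcomp Require Import generic_quotient boolp.

Set Implicit Arguments.
Unset Strict Implicit.
Unset Printing Implicit Defensive.

Import GRing.Theory.
Local Open Scope ring_scope.

Section LinearFunctions.
Variable K : fieldType.
Implicit Types U V W : lmodType K.

Lemma linD U W (f : U -> W) : linear f -> {morph f : x y / x + y}.
Proof. by move=> hf x y; have := hf 1 x y; rewrite !scale1r. Qed.

Lemma lin0 U W (f : U -> W) : linear f -> f 0 = 0.
Proof. by move=> hf; rewrite -(scale0r 0) linZ_aux // scale0r. Qed.

Lemma lin_sum U W (f : U -> W) I (r : seq I) (F : I -> U) :
  linear f -> f (\sum_(i <- r) F i) = \sum_(i <- r) f (F i).
Proof.
move=> hf; elim: r => [|i r IH]; first by rewrite !big_nil lin0.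
by rewrite !big_cons linD // IH.
Qed.

Lemma lin_id U : linear (fun x : U => x).
Proof. by []. Qed.

Lemma lin_comp U V W (f : V -> W) (g : U -> V) :
  linear f -> linear g -> linear (fun x => f (g x)).
Proof. by move=> hf hg a x y; rewrite hg hf. Qed.

Lemma scalar_comp U V (f : V -> K) (g : U -> V) :
  scalar f -> linear g -> scalar (fun x => f (g x)).
Proof. by move=> hf hg a x y; rewrite hg hf. Qed.

Lemma lin_scale U W (c : K) (f : U -> W) : linear f -> linear (fun x => c *: f x).
Proof. by move=> hf a x y; rewrite hf scalerDr !scalerA mulrC. Qed.

Lemma lin_scale_scalar U W (f : U -> K) (w : W) :
  scalar f -> linear (fun x => f x *: w).
Proof. by move=> hf a x y; rewrite hf scalerDl scalerA. Qed.

Lemma lin_sum_fun U W I (r : seq I) (F : I -> U -> W) :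
  (forall i, linear (F i)) -> linear (fun x => \sum_(i <- r) F i x).
Proof.
move=> hF a x y; rewrite scaler_sumr -big_split /=.
by apply: eq_bigr => i _; rewrite hF.
Qed.

End LinearFunctions.

Section TensorCalculus.
Variable K : fieldType.
Implicit Types U V W : lmodType K.

Section PureTensors.
Variables U V : lmodType K.

Lemma taddE (x y : tens U V) : x + y = tpi (repr x ++ repr y).
Proof. by []. Qed.

Lemma tscaleE a (x : tens U V) : a *: x = tpi (tscl a (repr x)).
Proof. by []. Qed.

Lemma tpi_cons p s : tpi (p :: s) = p.1 (x) p.2 + tpi s :> tens U V.
Proof.
rewrite taddE; apply: tpiP => W b hb.
by rewrite tsum_cat !tsum_repr // /tsum big_cons big_cons big_nil addr0.
Qed.

Lemma tens_sum_pure (x : tens U V) : x = \sum_(p <- repr x) p.1 (x) p.2.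
Proof.
rewrite {1}(tensE x); elim: (repr x) => [|p s IH]; first by rewrite big_nil.
by rewrite tpi_cons IH big_cons.
Qed.

Lemma tens_ext W (f g : tens U V -> W) :
  linear f -> linear g -> (forall u v, f (u (x) v) = g (u (x) v)) -> f =1 g.
Proof.
move=> hf hg h x; rewrite (tens_sum_pure x) !lin_sum //.
by apply: eq_bigr => p _; exact: h.
Qed.

Lemma tlift_pure W (b : U -> V -> W) u v : bilin b -> tlift b (u (x) v) = b u v.
Proof. by move=> hb; rewrite /tlift /tpure tsum_repr // /tsum big_cons big_nil addr0. Qed.

Lemma tlift_lin W (b : U -> V -> W) : bilin b -> linear (tlift b).
Proof.
move=> hb a x y; rewrite /tlift taddE tscaleE tsum_repr // tsum_cat tsum_repr //.
by rewrite tsum_scl.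
Qed.

Lemma tpure_linl (v : V) : linear (fun u : U => u (x) v).
Proof.
move=> a u u'; rewrite taddE tscaleE; apply: tpiP => W b hb.
rewrite tsum_cat !tsum_repr // tsum_scl // tsum_repr //.
by rewrite /tsum !big_cons !big_nil !addr0 /=; case: hb => _ ->.
Qed.

Lemma tpure_linr (u : U) : linear (fun v : V => u (x) v).
Proof.
move=> a v v'; rewrite taddE tscaleE; apply: tpiP => W b hb.
rewrite tsum_cat !tsum_repr // tsum_scl // tsum_repr //.
by rewrite /tsum !big_cons !big_nil !addr0 /=; case: hb => ->.
Qed.

Lemma tpureZl c u (v : V) : (c *: u) (x) v = c *: (u (x) v) :> tens U V.
Proof. exact: (linZ_aux (tpure_linl v)). Qed.

Lemma tpureZr c (u : U) v : u (x) (c *: v) = c *: (u (x) v) :> tens U V.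
Proof. exact: (linZ_aux (tpure_linr u)). Qed.

Lemma eq_tlift W (b b' : U -> V -> W) : (forall u v, b u v = b' u v) -> tlift b =1 tlift b'.
Proof. by move=> h x; rewrite (_ : b = b') //; apply: funext => u; apply: funext. Qed.

Lemma tlift_lin_param (T W : lmodType K) (b : T -> U -> V -> W) x :
  (forall u v, linear (fun t => b t u v)) -> linear (fun t => tlift (b t) x).
Proof. by move=> h; apply: lin_sum_fun => p; exact: h. Qed.

Lemma lin_tlift W W' (h : W -> W') (b : U -> V -> W) x :
  linear h -> h (tlift b x) = tlift (fun u v => h (b u v)) x.
Proof. by move=> hh; rewrite /tlift /tsum lin_sum. Qed.

End PureTensors.

Lemma tmap_bilin U V U' V' (f : U -> U') (g : V -> V') :
  linear f -> linear g -> bilin (fun u v => f u (x) g v).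
Proof.
move=> hf hg; split=> [u|v]; first exact: (lin_comp (tpure_linr _) hg).
exact: (lin_comp (tpure_linl _) hf).
Qed.

Lemma tmap_pure U V U' V' (f : U -> U') (g : V -> V') u v :
  linear f -> linear g -> tmap f g (u (x) v) = f u (x) g v.
Proof. by move=> hf hg; rewrite /tmap tlift_pure //; exact: tmap_bilin. Qed.

Lemma tmap_lin U V U' V' (f : U -> U') (g : V -> V') :
  linear f -> linear g -> linear (tmap f g).
Proof. by move=> hf hg; apply: tlift_lin; exact: tmap_bilin. Qed.

Lemma tassoc_bilin U V W :
  bilin (fun (y : tens U V) (w : W) => tlift (fun u v => u (x) (v (x) w)) y).
Proof.
have inner w : bilin (fun (u : U) (v : V) => u (x) (v (x) w)).
  by split=> [u|v]; [exact: (lin_comp (tpure_linr _) (tpure_linl _)) | exact: tpure_linl].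
split=> [y|w]; last by apply: tlift_lin.
by apply: tlift_lin_param => u v; exact: (lin_comp (tpure_linr _) (tpure_linr _)).
Qed.

Lemma tassoc_pure U V W (u : U) (v : V) (w : W) :
  tassoc ((u (x) v) (x) w) = u (x) (v (x) w).
Proof.
rewrite /tassoc !tlift_pure //; last exact: tassoc_bilin.
by split=> [u'|v']; [exact: (lin_comp (tpure_linr _) (tpure_linl _)) | exact: tpure_linl].
Qed.

Lemma tassoc_lin U V W : linear (@tassoc K U V W).
Proof. by apply: tlift_lin; exact: tassoc_bilin. Qed.

Lemma tassocV_bilin U V W :
  bilin (fun (u : U) (y : tens V W) => tlift (fun v w => (u (x) v) (x) w) y).
Proof.
have inner u : bilin (fun (v : V) (w : W) => (u (x) v) (x) w).
  by split=> [v|w]; [exact: tpure_linr | exact: (lin_comp (tpure_linl _) (tpure_linr _))].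
split=> [u|y]; first by apply: tlift_lin.
by apply: tlift_lin_param => v w; exact: (lin_comp (tpure_linl _) (tpure_linl _)).
Qed.

Lemma tassocV_pure U V W (u : U) (v : V) (w : W) :
  tassocV (u (x) (v (x) w)) = (u (x) v) (x) w.
Proof.
rewrite /tassocV !tlift_pure //; last exact: tassocV_bilin.
by split=> [v'|w']; [exact: tpure_linr | exact: (lin_comp (tpure_linl _) (tpure_linr _))].
Qed.

Lemma tassocV_lin U V W : linear (@tassocV K U V W).
Proof. by apply: tlift_lin; exact: tassocV_bilin. Qed.

End TensorCalculus.

Create HintDb linear.
#[export] Hint Extern 1 (GRing.linear_for _ _) => exact: lin_id : linear.
#[export] Hint Extern 1 (GRing.linear_for _ _) => exact: tpure_linl : linear.
#[export] Hint Extern 1 (GRing.linear_for _ _) => exact: tpure_linr : linear.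
#[export] Hint Extern 1 (GRing.linear_for _ _) => exact: tassoc_lin : linear.
#[export] Hint Extern 1 (GRing.linear_for _ _) => exact: tassocV_lin : linear.

Ltac is_scalar := lazymatch goal with |- GRing.linear_for (@GRing.mul _) _ => idtac end.

(* Splits a goal [linear f], [scalar f] or [bilin f] along the syntax of [f]; the leaves
   are closed by hypotheses or by the hint database [linear], which sections extend locally. *)
Ltac lin :=
  lazymatch goal with
  | |- bilin _ => split=> ? /=; lin
  | |- GRing.linear_for _ _ =>
    first
      [ match goal with H : _ |- _ => exact: H end
      | solve [eauto with linear]
      | match goal with
        | |- GRing.linear_for _ (tmap _ _) => apply: tmap_lin; lin
        | |- GRing.linear_for _ (tlift _) => apply: tlift_lin; lin
        | |- GRing.linear_for _ (GRing.scale ?c) =>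
            apply: (lin_scale c (f := fun x => x)); exact: lin_id
        | |- GRing.linear_for _ (fun t => tlift (@?B t) ?y0) =>
            apply: tlift_lin_param => ? ? /=; lin
        | |- GRing.linear_for _ (fun x => ?c *: @?G x) => apply: (lin_scale c (f := G)); lin
        | |- GRing.linear_for _ (fun x => @?F x *: ?w) =>
            apply: (lin_scale_scalar (f := F) w); lin
        | |- GRing.linear_for _ (fun x => ?F (@?G x) ?w) =>
            lazymatch G with (fun y => y) => fail | _ => idtac end;
            (tryif is_scalar then apply: (scalar_comp (f := fun z => F z w) (g := G))
             else apply: (lin_comp (f := fun z => F z w) (g := G))); lin
        | |- GRing.linear_for _ (fun x => ?F (@?G x)) =>
            (tryif is_scalar then apply: (scalar_comp (f := F) (g := G))
             else apply: (lin_comp (f := F) (g := G))); lin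
        end ]
  end.

Section TensorIdentities.
Variable K : fieldType.
Implicit Types U V W : lmodType K.

Lemma tens3_ext U V W (Z : lmodType K) (f g : tens (tens U V) W -> Z) :
  linear f -> linear g -> (forall u v w, f ((u (x) v) (x) w) = g ((u (x) v) (x) w)) ->
  f =1 g.
Proof.
move=> hf hg h; apply: tens_ext => // y w.
apply: (tens_ext (f := fun y => f (y (x) w)) (g := fun y => g (y (x) w))); try lin.
by move=> u v /=; exact: h.
Qed.

Lemma tassocK U V W : cancel (@tassoc K U V W) (@tassocV K U V W).
Proof.
apply: (tens3_ext (g := id)); try lin.
by move=> u v w; rewrite tassoc_pure tassocV_pure.
Qed.

Lemma tmap_comp U V U' V' U'' V'' (f : U' -> U'') (g : V' -> V'') (f' : U -> U')
    (g' : V -> V') x :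
  linear f -> linear g -> linear f' -> linear g' ->
  tmap f g (tmap f' g' x) = tmap (fun u => f (f' u)) (fun v => g (g' v)) x.
Proof.
move=> hf hg hf' hg'; move: x; apply: tens_ext; try lin.
by move=> u v; rewrite !tmap_pure //; lin.
Qed.

Lemma tmap_id U V : tmap id id =1 (id : tens U V -> tens U V).
Proof. by apply: tens_ext; try lin; move=> u v; rewrite tmap_pure. Qed.

Lemma eq_tmap U V U' V' (f f' : U -> U') (g g' : V -> V') :
  f =1 f' -> g =1 g' -> tmap f g =1 tmap f' g'.
Proof. by move=> /funext -> /funext ->. Qed.

Lemma tlift_tmap U V U' V' W (b : U' -> V' -> W) (f : U -> U') (g : V -> V') x :
  bilin b -> linear f -> linear g ->
  tlift b (tmap f g x) = tlift (fun u v => b (f u) (g v)) x.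
Proof.
move=> [hbl hbr] hf hg; move: x; apply: tens_ext; try lin.
by move=> u v; rewrite tmap_pure // !tlift_pure //; lin.
Qed.

Lemma tlift_tassoc U V W (Z : lmodType K) (b : U -> tens V W -> Z) (s : tens U V) (w : W) :
  bilin b -> tlift b (tassoc (s (x) w)) = tlift (fun u v => b u (v (x) w)) s.
Proof.
move=> [hbl hbr]; move: s; apply: tens_ext; try lin.
by move=> u v; rewrite tassoc_pure !tlift_pure //; lin.
Qed.

Lemma tlift_tassocV U V W (Z : lmodType K) (b : tens U V -> W -> Z) (u : U) (t : tens V W) :
  bilin b -> tlift b (tassocV (u (x) t)) = tlift (fun v w => b (u (x) v) w) t.
Proof.
move=> [hbl hbr]; move: t; apply: tens_ext; try lin.
by move=> v w; rewrite tassocV_pure !tlift_pure //; lin.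
Qed.

Lemma tassocV_tmap U V W (u : U) (t : tens V W) :
  tassocV (u (x) t) = tmap (fun v => u (x) v) id t.
Proof.
move: t; apply: tens_ext; try lin.
by move=> v w; rewrite tassocV_pure tmap_pure //; lin.
Qed.

Lemma tmap_tassocV U V W W' (f : W -> W') (u : U) (t : tens V W) :
  linear f -> tmap id f (tassocV (u (x) t)) = tassocV (u (x) tmap id f t).
Proof.
move=> hf; move: t; apply: tens_ext; try lin.
by move=> v w; rewrite !tmap_pure ?tassocV_pure ?tmap_pure //; lin.
Qed.

Lemma tassoc_tassocV U V W (Z : lmodType K) (u : U) (t : tens V W) (z : Z) :
  tassoc (tassocV (u (x) t) (x) z) = tassocV (u (x) tassoc (t (x) z)).
Proof.
move: t; apply: tens_ext; try lin.
by move=> v w; rewrite tassocV_pure !tassoc_pure tassocV_pure.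
Qed.

Lemma tlift_scale_tassocV U V W (phi : W -> K) (u : U) (t : tens V W) :
  scalar phi ->
  tlift (fun (y : tens U V) w => phi w *: y) (tassocV (u (x) t))
  = u (x) tlift (fun v w => phi w *: v) t.
Proof.
move=> hphi; rewrite tlift_tassocV ?lin_tlift //; try lin.
by apply: eq_tlift => v w; rewrite tpureZr.
Qed.

End TensorIdentities.

Section AlgebraMultiplication.
Variables (K : fieldType) (A : algType K).

Lemma mulr_linl (b : A) : linear (fun a : A => a * b).
Proof. by move=> c x y; rewrite mulrDl -scalerAl. Qed.

Lemma mulr_linr (a : A) : linear (fun b : A => a * b).
Proof. by move=> c x y; rewrite mulrDr -scalerAr. Qed.

Lemma mulA_bilin : bilin (fun a b : A => a * b).
Proof. by split; [exact: mulr_linr | exact: mulr_linl]. Qed.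

Lemma mulA_pure (a b : A) : Defs.mulA K A (a (x) b) = a * b.
Proof. by rewrite /Defs.mulA tlift_pure //; exact: mulA_bilin. Qed.

Lemma mulA_lin : linear (Defs.mulA K A).
Proof. by apply: tlift_lin; exact: mulA_bilin. Qed.

End AlgebraMultiplication.

#[export] Hint Extern 1 (GRing.linear_for _ _) => exact: mulr_linl : linear.
#[export] Hint Extern 1 (GRing.linear_for _ _) => exact: mulr_linr : linear.
#[export] Hint Extern 1 (GRing.linear_for _ _) => exact: mulA_lin : linear.

Unset Implicit Arguments.

Section Entwining.
Variables (K : fieldType) (Ob : Type) (C : Ob -> Ob -> lmodType K).
Variable delta : forall X Y Z : Ob, C X Z -> tens (C Y Z) (C X Y).
Variable eps : forall X : Ob, C X X -> K.
Variable A : algType K.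
Variable psi : forall X Y : Ob, tens (C X Y) A -> tens A (C X Y).

Hypothesis delta_lin : forall X Y Z, linear (delta X Y Z).
Hypothesis eps_scalar : forall X, scalar (eps X).
Hypothesis delta_coassoc : forall X Y W Z (f : C X Z),
  tassoc (tmap (delta Y W Z) id (delta X Y Z f)) = tmap id (delta X Y W) (delta X W Z f).
Hypothesis delta_counitl : forall X Y (f : C X Y),
  tlift (fun (g : C Y Y) (h : C X Y) => eps Y g *: h) (delta X Y Y f) = f.
Hypothesis delta_counitr : forall X Y (f : C X Y),
  tlift (fun (h : C X Y) (g : C X X) => eps X g *: h) (delta X X Y f) = f.
Hypothesis psi_lin : forall X Y, linear (psi X Y).
Hypothesis psi_delta : forall X Y Z (t : tens (C X Z) A),
  tmap id (delta X Y Z) (psi X Z t)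
  = tassoc (tmap (psi Y Z) id
      (tassocV (tmap id (psi X Y) (tassoc (tmap (delta X Y Z) id t))))).
Hypothesis psi_mul : forall X Z (t : tens (C X Z) (tens A A)),
  psi X Z (tmap id (Defs.mulA K A) t)
  = tmap (Defs.mulA K A) id
      (tassocV (tmap id (psi X Z) (tassoc (tmap (psi X Z) id (tassocV t))))).
Hypothesis psi_unit : forall X Z (f : C X Z), psi X Z (f (x) 1) = 1 (x) f.
Hypothesis psi_eps : forall Z (g : C Z Z) (a : A),
  tlift (fun (a' : A) (g' : C Z Z) => eps Z g' *: a') (psi Z Z (g (x) a)) = eps Z g *: a.

Local Notation comod := (Defs.comod K Ob C delta eps).
Local Notation Comod := (Defs.Comod K Ob C delta eps).
Local Notation cM := (Defs.cM K Ob C delta eps).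
Local Notation crho := (Defs.crho K Ob C delta eps).
Local Notation crho_ax := (Defs.crho_ax K Ob C delta eps).
Local Notation is_comod := (Defs.is_comod K Ob C delta eps).
Local Notation is_comod_hom := (Defs.is_comod_hom K Ob C delta eps).
Local Notation FM := (Defs.FM K Ob C delta eps A).
Local Notation Frho := (Defs.Frho K Ob C delta eps A psi).
Local Notation Fact := (Defs.Fact K Ob C delta eps A).
Local Notation Fmap := (Defs.Fmap K Ob C delta eps A).
Local Notation is_Fhom := (Defs.is_Fhom K Ob C delta eps A psi).

Lemma rho_lin (M : comod) X Y : linear (crho M X Y).
Proof. by case: (crho_ax M). Qed.

Lemma rho_coassoc (M : comod) X Z Y (m : cM M X) :
  tassoc (tmap (crho M Z Y) id (crho M X Z m)) = tmap id (delta X Z Y) (crho M X Y m).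
Proof. by case: (crho_ax M). Qed.

Lemma rho_counit (M : comod) X (m : cM M X) :
  tlift (fun (n : cM M X) (g : C X X) => eps X g *: n) (crho M X X m) = m.
Proof. by case: (crho_ax M). Qed.

#[local] Hint Extern 1 (GRing.linear_for _ _) => exact: rho_lin : linear.

Lemma comod_hom_lin (M N : comod) (phi : forall X, cM M X -> cM N X) :
  is_comod_hom M N phi -> forall X, linear (phi X).
Proof. by case. Qed.

Lemma comod_hom_rho (M N : comod) (phi : forall X, cM M X -> cM N X) :
  is_comod_hom M N phi ->
  forall X Y m, crho N X Y (phi X m) = tmap (phi Y) id (crho M X Y m).
Proof. by case. Qed.

Lemma comod_hom_id (M : comod) : is_comod_hom M M (fun X m => m).
Proof. by split=> // X Y m; rewrite tmap_id. Qed.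

Lemma Frho_lin (M : comod) X Y : linear (Frho M X Y).
Proof. by rewrite /Frho; lin. Qed.

#[local] Hint Extern 1 (GRing.linear_for _ _) => exact: Frho_lin : linear.

Lemma Frho_pure (M : comod) X Y (m : cM M X) (a : A) :
  Frho M X Y (m (x) a) = tassocV (tmap id (psi X Y) (tassoc (crho M X Y m (x) a))).
Proof. by rewrite /Frho tmap_pure //; lin. Qed.

Lemma Frho_pure1 (M : comod) X Y (m : cM M X) :
  Frho M X Y (m (x) 1) = tmap (fun n => n (x) 1) id (crho M X Y m).
Proof.
rewrite Frho_pure; move: (crho M X Y m); apply: tens_ext; try lin.
by move=> n f; rewrite tassoc_pure tmap_pure ?psi_unit ?tassocV_pure ?tmap_pure //; lin.
Qed.

Lemma Frho_counit (M : comod) X (x : FM M X) :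
  tlift (fun (y : FM M X) (g : C X X) => eps X g *: y) (Frho M X X x) = x.
Proof.
move: x; apply: tens_ext; try lin.
move=> m a; rewrite Frho_pure -{2}(rho_counit M X m).
move: (crho M X X m); apply: tens_ext; try lin.
move=> n g; rewrite tassoc_pure tmap_pure ?tlift_scale_tassocV ?psi_eps ?tlift_pure //; try lin.
by rewrite tpureZl tpureZr.
Qed.

(* [psi2 X Z Y a (f1 (x) f2) = a_psi_psi' (x) f1^psi' (x) f2^psi] moves [a] across both legs,
   as on the right-hand side of the entwining axiom (i). *)
Definition psi2 X Z Y (a : A) (d : tens (C Z Y) (C X Z)) : tens A (tens (C Z Y) (C X Z)) :=
  tassoc (tmap (psi Z Y) id (tassocV (tmap id (psi X Z) (tassoc (d (x) a))))).

Lemma psi2_lin X Z Y a : linear (psi2 X Z Y a).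
Proof. by rewrite /psi2; lin. Qed.

#[local] Hint Extern 1 (GRing.linear_for _ _) => exact: psi2_lin : linear.

Lemma psi2_pure X Z Y a (c : C Z Y) (k : C X Z) :
  psi2 X Z Y a (c (x) k) = tassoc (tmap (psi Z Y) id (tassocV (c (x) psi X Z (k (x) a)))).
Proof. by rewrite /psi2 tassoc_pure tmap_pure //; lin. Qed.

Lemma psi_delta_pure X Z Y (h : C X Y) (a : A) :
  tmap id (delta X Z Y) (psi X Y (h (x) a)) = psi2 X Z Y a (delta X Z Y h).
Proof. by rewrite psi_delta tmap_pure //; lin. Qed.

(* Both sides of the coassociativity of [Frho M] factor through [Frho2], applied to the two
   sides of the coassociativity of [crho M]. *)
Definition Frho2 (M : comod) X Z Y (a : A) :
    tens (cM M Y) (tens (C Z Y) (C X Z)) -> tens (FM M Y) (tens (C Z Y) (C X Z)) :=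
  tlift (fun m d => tassocV (m (x) psi2 X Z Y a d)).

Lemma Frho2_bilin (M : comod) X Z Y a :
  bilin (fun (m : cM M Y) (d : tens (C Z Y) (C X Z)) => tassocV (m (x) psi2 X Z Y a d)).
Proof. by lin. Qed.

Lemma Frho2_lin (M : comod) X Z Y a : linear (Frho2 M X Z Y a).
Proof. by apply: tlift_lin; exact: Frho2_bilin. Qed.

#[local] Hint Extern 1 (GRing.linear_for _ _) => exact: Frho2_lin : linear.

Lemma Frho_delta (M : comod) X Z Y (m : cM M X) (a : A) :
  tmap id (delta X Z Y) (Frho M X Y (m (x) a))
  = Frho2 M X Z Y a (tmap id (delta X Z Y) (crho M X Y m)).
Proof.
rewrite Frho_pure; move: (crho M X Y m); apply: tens_ext; try lin.
move=> n h; rewrite tassoc_pure !tmap_pure ?tmap_tassocV ?psi_delta_pure //; try lin.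
by rewrite /Frho2 tlift_pure //; exact: Frho2_bilin.
Qed.

Lemma Frho_Frho (M : comod) X Z Y (m : cM M X) (a : A) :
  tassoc (tmap (Frho M Z Y) id (Frho M X Z (m (x) a)))
  = Frho2 M X Z Y a (tassoc (tmap (crho M Z Y) id (crho M X Z m))).
Proof.
rewrite Frho_pure; move: (crho M X Z m); apply: tens_ext; try lin.
move=> n k; rewrite tassoc_pure !tmap_pure // ?tassocV_tmap ?tmap_comp //; try lin.
rewrite /Frho2 tlift_tassoc; last exact: Frho2_bilin.
under eq_tlift do rewrite psi2_pure.
under eq_tmap => [b|b] do [rewrite Frho_pure|].
move: (psi X Z (k (x) a)) (crho M Z Y n) => q s; move: q; apply: tens_ext; try lin.
move=> b k'; rewrite tmap_pure //; try lin.
move: s; apply: tens_ext; try lin.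
move=> n' c; rewrite tassoc_pure tmap_pure ?tassoc_tassocV ?tlift_pure; try lin.
by rewrite tassocV_pure tmap_pure //; lin.
Qed.

Lemma Frho_coassoc (M : comod) X Z Y (x : FM M X) :
  tassoc (tmap (Frho M Z Y) id (Frho M X Z x)) = tmap id (delta X Z Y) (Frho M X Y x).
Proof.
move: x; apply: tens_ext; try lin.
by move=> m a; rewrite Frho_Frho Frho_delta rho_coassoc.
Qed.

Lemma UF_ax (M : comod) : is_comod (FM M) (Frho M).
Proof. by split; [exact: Frho_lin | exact: Frho_coassoc | exact: Frho_counit]. Qed.

Definition UF (M : comod) : comod := Comod (FM M) (Frho M) (UF_ax M).

Lemma Fact_bilin (M : comod) X : bilin (Fact M X).
Proof. by rewrite /Fact /tmap; lin. Qed.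

(* The counit of the adjunction [F_psi -| U] at [F_psi M]: (m (x) a) (x) b |-> m (x) ab. *)
Definition Fcounit (M : comod) X : FM (UF M) X -> FM M X := tlift (Fact M X).

Lemma Fcounit_lin (M : comod) X : linear (Fcounit M X).
Proof. by apply: tlift_lin; exact: Fact_bilin. Qed.

#[local] Hint Extern 1 (GRing.linear_for _ _) => exact: Fcounit_lin : linear.

Lemma Fcounit_pure (M : comod) X (y : FM M X) (b : A) : Fcounit M X (y (x) b) = Fact M X y b.
Proof. by rewrite /Fcounit tlift_pure //; exact: Fact_bilin. Qed.

Lemma Fcounit_act (M : comod) X (x : FM (UF M) X) (a : A) :
  Fcounit M X (Fact (UF M) X x a) = Fact M X (Fcounit M X x) a.
Proof.
move: x; apply: tens_ext; rewrite /Fact; try lin.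
move=> y b; rewrite tmap_pure ?Fcounit_pure /Fact ?tmap_comp //; try lin.
by apply: eq_tmap => // c; rewrite mulrA.
Qed.

Lemma psi_mul_pure X Y (h : C X Y) (a b : A) :
  psi X Y (h (x) (a * b))
  = tmap (Defs.mulA K A) id (tassocV (tmap id (psi X Y) (tassoc (psi X Y (h (x) a) (x) b)))).
Proof.
rewrite -mulA_pure -[h (x) _](@tmap_pure _ _ _ _ _ id) ?psi_mul; try lin.
by rewrite tassocV_pure tmap_pure //; lin.
Qed.

Lemma Fcounit_rho (M : comod) X Y (x : FM (UF M) X) :
  Frho M X Y (Fcounit M X x) = tmap (Fcounit M Y) id (Frho (UF M) X Y x).
Proof.
move: x; apply: tens_ext; try lin.
move=> y b; rewrite Fcounit_pure Frho_pure /=; move: y; apply: tens_ext; rewrite /Fact; try lin.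
move=> m a; rewrite tmap_pure ?Frho_pure //; try lin.
move: (crho M X Y m); apply: tens_ext; try lin.
move=> n h; rewrite !tassoc_pure !tmap_pure ?psi_mul_pure //; try lin.
rewrite !tassocV_tmap !tmap_comp; try lin.
move: (psi X Y (h (x) a)); apply: tens_ext; try lin.
move=> a' h'; rewrite tassoc_pure !tmap_pure ?tassoc_pure ?tmap_pure //; try lin.
rewrite !tassocV_tmap !tmap_comp; try lin.
by apply: eq_tmap => // b'; rewrite mulA_pure Fcounit_pure /Fact tmap_pure //; lin.
Qed.

Lemma Fcounit_Fhom (M : comod) : is_Fhom (UF M) M (Fcounit M).
Proof. by split; [exact: Fcounit_lin | exact: Fcounit_act | exact: Fcounit_rho]. Qed.

Lemma Frho_Fmap (M N : comod) (phi : forall X, cM M X -> cM N X) :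
  is_comod_hom M N phi ->
  forall X Y x, Frho N X Y (Fmap M N phi X x) = tmap (Fmap M N phi Y) id (Frho M X Y x).
Proof.
move=> [phi_lin phi_rho] X Y; rewrite /Fmap; apply: tens_ext; try lin.
move=> m a; rewrite tmap_pure ?Frho_pure ?phi_rho //; try lin.
move: (crho M X Y m); apply: tens_ext; try lin.
move=> n h; rewrite tmap_pure ?tassoc_pure ?tmap_pure //; try lin.
rewrite !tassocV_tmap !tmap_comp; try lin.
by apply: eq_tmap => // b; rewrite /= tmap_pure //; lin.
Qed.

Lemma Fmap_Fhom (M N : comod) (phi : forall X, cM M X -> cM N X) :
  is_comod_hom M N phi -> is_Fhom M N (Fmap M N phi).
Proof.
move=> hphi; have phi_lin := comod_hom_lin _ _ _ hphi; split.
- by move=> X; rewrite /Fmap; lin.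
- by move=> X x a; rewrite /Fmap /Fact !tmap_comp //; lin.
- exact: Frho_Fmap.
Qed.

Lemma Fmap_comod_hom (M N : comod) (phi : forall X, cM M X -> cM N X) :
  is_comod_hom M N phi -> is_comod_hom (UF M) (UF N) (Fmap M N phi).
Proof.
move=> hphi; split; last exact: Frho_Fmap.
by move=> X; have phi_lin := comod_hom_lin _ _ _ hphi X; rewrite /Fmap; lin.
Qed.

Lemma Fhom_comp (M N Q : comod) (g : forall X, FM M X -> FM N X)
    (h : forall X, FM N X -> FM Q X) :
  is_Fhom M N g -> is_Fhom N Q h -> is_Fhom M Q (fun X x => h X (g X x)).
Proof.
move=> [g_lin g_act g_rho] [h_lin h_act h_rho]; split.
- by move=> X; exact: lin_comp.
- by move=> X x a; rewrite g_act h_act.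
- by move=> X Y x; rewrite h_rho g_rho tmap_comp.
Qed.

Lemma Funit_comod_hom (M : comod) : is_comod_hom M (UF M) (fun X m => m (x) 1).
Proof. by split=> [X | X Y m]; [lin | rewrite /= Frho_pure1]. Qed.

Lemma Ccomod_ax X0 : is_comod (fun Y => C Y X0) (fun Y Z => delta Y Z X0).
Proof. by split=> [X Y | X Z Y m | X m]; [lin | exact: delta_coassoc | exact: delta_counitr]. Qed.

Definition Ccomod X0 : comod := Comod (fun Y => C Y X0) (fun Y Z => delta Y Z X0) (Ccomod_ax X0).

Section Cofree.
Variables (V : lmodType K) (X0 : Ob).

Definition cofree_rho Z W (x : tens V (C Z X0)) : tens (tens V (C W X0)) (C Z W) :=
  tassocV (tmap id (delta Z W X0) x).

Lemma cofree_rho_pure Z W v c : cofree_rho Z W (v (x) c) = tassocV (v (x) delta Z W X0 c).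
Proof. by rewrite /cofree_rho tmap_pure //; lin. Qed.

Lemma cofree_ax : is_comod (fun Z => tens V (C Z X0)) cofree_rho.
Proof.
have rho_lin Z W : linear (cofree_rho Z W) by rewrite /cofree_rho; lin.
split=> [// | Z W Y | Z]; apply: tens_ext; try lin.
- move=> v c; rewrite !cofree_rho_pure tmap_tassocV; last by lin.
  rewrite -delta_coassoc.
  move: (delta Z W X0 c); apply: tens_ext; try lin.
  move=> d1 d2; rewrite tassocV_pure !tmap_pure ?cofree_rho_pure //; try lin.
  by rewrite tassoc_tassocV.
- by move=> v c; rewrite cofree_rho_pure tlift_scale_tassocV ?delta_counitr.
Qed.

Definition cofree : comod := Comod (fun Z => tens V (C Z X0)) cofree_rho cofree_ax.

Lemma tpure_comod_hom (v : V) :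
  is_comod_hom (Ccomod X0) cofree (fun Z (c : C Z X0) => v (x) c : tens V (C Z X0)).
Proof. by split=> [Z | Z W c]; [lin | rewrite /= cofree_rho_pure tassocV_tmap]. Qed.

End Cofree.

Lemma rho_comod_hom (M : comod) X0 :
  is_comod_hom M (cofree (cM M X0) X0) (fun Z => crho M Z X0).
Proof.
split=> [Z | Z W m]; first by lin.
by rewrite /= /cofree_rho -rho_coassoc tassocK.
Qed.

Section Sufficiency.
Variable sigma : forall X, tens (C X X) A -> K.
Hypothesis sigma_V1 : inV1 K Ob C delta A psi sigma.
Hypothesis sigma_unit : forall X (f : C X X), sigma X (f (x) 1) = eps X f.

Lemma sigma_scalar X : scalar (sigma X).
Proof. by case: sigma_V1. Qed.

#[local] Hint Extern 1 (GRing.linear_for _ _) => exact: sigma_scalar : linear.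

Definition sigma_contr (W : lmodType K) X (a : A) : tens W (C X X) -> W :=
  tlift (fun w g => sigma X (g (x) a) *: w).

Lemma sigma_contr_lin (W : lmodType K) X a : linear (sigma_contr W X a).
Proof. by rewrite /sigma_contr; lin. Qed.

Lemma sigma_contr_linA (W : lmodType K) X t : linear (fun a => sigma_contr W X a t).
Proof. by rewrite /sigma_contr; lin. Qed.

#[local] Hint Extern 1 (GRing.linear_for _ _) => exact: sigma_contr_lin : linear.
#[local] Hint Extern 1 (GRing.linear_for _ _) => exact: sigma_contr_linA : linear.

Lemma sigma_contr_pure (W : lmodType K) X a (w : W) g :
  sigma_contr W X a (w (x) g) = sigma X (g (x) a) *: w.
Proof. by rewrite /sigma_contr tlift_pure //; lin. Qed.

Lemma lin_sigma_contr (W W' : lmodType K) X Y (r : W -> tens W' (C X Y)) a t :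
  linear r ->
  r (sigma_contr W X a t) = tmap id (sigma_contr (C X Y) X a) (tassoc (tmap r id t)).
Proof.
move=> r_lin; move: t; apply: tens_ext; try lin.
move=> w g; rewrite sigma_contr_pure linZ_aux // tmap_pure //; try lin.
move: (r w); apply: tens_ext; try lin.
by move=> w' f; rewrite tassoc_pure tmap_pure ?sigma_contr_pure ?tpureZr //; lin.
Qed.

Definition V1_lhs X Y (a : A) (d : tens (C Y Y) (C X Y)) : C X Y :=
  tlift (fun s h => sigma Y s *: h) (tassocV (tmap id (psi X Y) (tassoc (d (x) a)))).

Lemma V1_lhs_lin X Y a : linear (V1_lhs X Y a).
Proof. by rewrite /V1_lhs; lin. Qed.

#[local] Hint Extern 1 (GRing.linear_for _ _) => exact: V1_lhs_lin : linear.

Lemma V1_lhs_pure X Y a (g : C Y Y) (h : C X Y) :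
  V1_lhs X Y a (g (x) h) = tlift (fun b h' => sigma Y (g (x) b) *: h') (psi X Y (h (x) a)).
Proof. by rewrite /V1_lhs tassoc_pure tmap_pure ?tlift_tassocV //; lin. Qed.

Lemma V1_delta X Y (f : C X Y) a :
  V1_lhs X Y a (delta X Y Y f) = sigma_contr (C X Y) X a (delta X X Y f).
Proof. by case: sigma_V1 => _; apply. Qed.

Definition nu (M : comod) X : FM M X -> cM M X :=
  tlift (fun m a => sigma_contr (cM M X) X a (crho M X X m)).

Lemma nu_bilin (M : comod) X : bilin (fun m a => sigma_contr (cM M X) X a (crho M X X m)).
Proof. by lin. Qed.

Lemma nu_lin (M : comod) X : linear (nu M X).
Proof. by apply: tlift_lin; exact: nu_bilin. Qed.

#[local] Hint Extern 1 (GRing.linear_for _ _) => exact: nu_lin : linear.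

Lemma nu_pure (M : comod) X m a : nu M X (m (x) a) = sigma_contr (cM M X) X a (crho M X X m).
Proof. by rewrite /nu tlift_pure //; exact: nu_bilin. Qed.

Lemma nu_unit (M : comod) X m : nu M X (m (x) 1) = m.
Proof.
rewrite nu_pure -[RHS](rho_counit M X m); apply: eq_tlift => n g.
by rewrite sigma_unit.
Qed.

Lemma nu_nat (M N : comod) (phi : forall X, cM M X -> cM N X) :
  is_comod_hom M N phi -> forall X x, nu N X (tmap (phi X) id x) = phi X (nu M X x).
Proof.
move=> hphi X; have phi_lin := comod_hom_lin _ _ _ hphi; apply: tens_ext; try lin.
move=> m a; rewrite tmap_pure ?nu_pure ?(comod_hom_rho _ _ _ hphi) //; try lin.
rewrite /sigma_contr tlift_tmap ?lin_tlift //; try lin.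
by apply: eq_tlift => n g; rewrite linZ_aux.
Qed.

Lemma nu_rho (M : comod) X Y (m : cM M X) a :
  crho M X Y (nu M X (m (x) a))
  = tmap id (sigma_contr (C X Y) X a) (tassoc (tmap (crho M X Y) id (crho M X X m))).
Proof. by rewrite nu_pure lin_sigma_contr //; lin. Qed.

Lemma sigma_contr_swap (W : lmodType K) X Y (s : tens W (C Y Y)) (q : tens A (C X Y)) :
  tlift (fun b h => sigma_contr W Y b s (x) h) q
  = tlift (fun w g => w (x) tlift (fun b h => sigma Y (g (x) b) *: h) q) s.
Proof.
move: q; apply: tens_ext; try lin.
move=> b h; rewrite tlift_pure; last by lin.
move: s; apply: tens_ext; try lin.
by move=> w g; rewrite sigma_contr_pure !tlift_pure ?tpureZl ?tpureZr //; lin.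
Qed.

Lemma nu_Frho (M : comod) X Y (m : cM M X) a :
  tmap (nu M Y) id (Frho M X Y (m (x) a))
  = tmap id (V1_lhs X Y a) (tassoc (tmap (crho M Y Y) id (crho M X Y m))).
Proof.
rewrite Frho_pure; move: (crho M X Y m); apply: tens_ext; try lin.
move=> n h; rewrite tassoc_pure !tmap_pure //; try lin.
rewrite /tmap tlift_tassocV ?tlift_tassoc; try lin.
under eq_tlift do rewrite nu_pure.
under [RHS]eq_tlift do rewrite V1_lhs_pure.
exact: sigma_contr_swap.
Qed.

Lemma nu_comod_hom (M : comod) : is_comod_hom (UF M) M (nu M).
Proof.
split=> [X | X Y]; first exact: nu_lin.
apply: tens_ext; try lin.
move=> m a; rewrite nu_rho /= nu_Frho !rho_coassoc !tmap_comp; try lin.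
by apply: eq_tmap => // f; rewrite V1_delta.
Qed.

Lemma Fpsi_separable_of_sigma : Fpsi_separable K Ob C delta eps A psi.
Proof.
exists (fun M N g _ X m => nu N X (g X (m (x) 1))); split.
- move=> M N g [g_lin g_act g_rho]; split=> [X | X Y m]; first by lin.
  by rewrite (proj2 (nu_comod_hom N)) /= g_rho Frho_pure1 !tmap_comp //; lin.
- move=> M N phi hphi _ X m; have phi_lin := comod_hom_lin _ _ _ hphi.
  by rewrite /Fmap tmap_pure ?nu_unit //; lin.
- move=> M' M N N' alpha beta g _ halpha hbeta _ X m.
  have alpha_lin := comod_hom_lin _ _ _ halpha.
  by rewrite /Fmap tmap_pure ?nu_nat //; lin.
Qed.

End Sufficiency.

Section Necessity.
Variable P : forall (M N : comod) (g : forall X, FM M X -> FM N X),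
  is_Fhom M N g -> forall X, cM M X -> cM N X.
Hypothesis P_hom : forall M N g (hg : is_Fhom M N g), is_comod_hom M N (P M N g hg).
Hypothesis P_Fmap : forall M N (phi : forall X, cM M X -> cM N X)
    (hphi : is_comod_hom M N phi) (hF : is_Fhom M N (Fmap M N phi)) X (m : cM M X),
  P M N (Fmap M N phi) hF X m = phi X m.
Hypothesis P_nat : forall M' M N N' (alpha : forall X, cM M' X -> cM M X)
    (beta : forall X, cM N X -> cM N' X)
    (g : forall X, FM M X -> FM N X) (hg : is_Fhom M N g),
  is_comod_hom M' M alpha -> is_comod_hom N N' beta ->
  forall hc : is_Fhom M' N' (fun X x => Fmap N N' beta X (g X (Fmap M' M alpha X x))),
  forall X (m : cM M' X), P M' N' _ hc X m = beta X (P M N g hg X (alpha X m)).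

Lemma P_ext M N (g g' : forall X, FM M X -> FM N X) (hg : is_Fhom M N g)
    (hg' : is_Fhom M N g') :
  (forall X x, g X x = g' X x) -> forall X m, P M N g hg X m = P M N g' hg' X m.
Proof.
move=> eq_g; have {}eq_g : g = g'.
  by apply: functional_extensionality_dep => X; apply: funext; exact: eq_g.
by subst g'; rewrite (Prop_irrelevance hg hg').
Qed.

Definition nuP (M : comod) : forall X, FM M X -> cM M X :=
  P (UF M) M (Fcounit M) (Fcounit_Fhom M).

Lemma nuP_comod_hom (M : comod) : is_comod_hom (UF M) M (nuP M).
Proof. exact: P_hom. Qed.

Lemma nuP_lin (M : comod) X : linear (nuP M X).
Proof. exact: comod_hom_lin _ _ _ (nuP_comod_hom M) X. Qed.

#[local] Hint Extern 1 (GRing.linear_for _ _) => exact: nuP_lin : linear.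

Lemma Fcounit_Funit (M : comod) X (x : FM M X) :
  Fcounit M X (Fmap M (UF M) (fun Y m => m (x) 1) X x) = x.
Proof.
move: x; apply: tens_ext; rewrite /Fmap; try lin.
by move=> m a; rewrite tmap_pure ?Fcounit_pure /Fact ?tmap_pure ?mul1r //; lin.
Qed.

(* A triangle identity of [F_psi -| U] and the naturality of [P]. *)
Lemma nuP_unit (M : comod) X (m : cM M X) : nuP M X (m (x) 1) = m.
Proof.
have h_id := Fmap_Fhom M M _ (comod_hom_id M).
have h_unit := Fmap_Fhom M (UF M) _ (Funit_comod_hom M).
have hc := Fhom_comp _ _ _ _ _ (Fhom_comp _ _ _ _ _ h_unit (Fcounit_Fhom M)) h_id.
rewrite /nuP -(P_nat M (UF M) M M _ _ _ _ (Funit_comod_hom M) (comod_hom_id M) hc).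
rewrite -[RHS](P_Fmap M M _ (comod_hom_id M) h_id X m).
by apply: P_ext => Y x; congr (Fmap M M _ Y _); exact: Fcounit_Funit.
Qed.

Lemma Fcounit_nat (M N : comod) (phi : forall X, cM M X -> cM N X) :
  is_comod_hom M N phi -> forall X x,
  Fcounit N X (Fmap (UF M) (UF N) (Fmap M N phi) X x) = Fmap M N phi X (Fcounit M X x).
Proof.
move=> hphi X; have phi_lin := comod_hom_lin _ _ _ hphi.
apply: tens_ext; rewrite /Fmap; try lin.
by move=> y b; rewrite !tmap_pure ?Fcounit_pure /Fact ?tmap_comp //; lin.
Qed.

Lemma nuP_nat (M N : comod) (phi : forall X, cM M X -> cM N X) :
  is_comod_hom M N phi -> forall X x, nuP N X (Fmap M N phi X x) = phi X (nuP M X x).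
Proof.
move=> hphi X x.
have hF := Fmap_comod_hom M N phi hphi.
have hc1 := Fhom_comp _ _ _ _ _ (Fhom_comp _ _ _ _ _
  (Fmap_Fhom _ _ _ (comod_hom_id (UF M))) (Fcounit_Fhom M)) (Fmap_Fhom _ _ _ hphi).
have hc2 := Fhom_comp _ _ _ _ _ (Fhom_comp _ _ _ _ _
  (Fmap_Fhom _ _ _ hF) (Fcounit_Fhom N)) (Fmap_Fhom _ _ _ (comod_hom_id N)).
rewrite /nuP -(P_nat _ _ _ _ _ _ _ _ hF (comod_hom_id N) hc2).
rewrite -(P_nat _ _ _ _ _ _ _ _ (comod_hom_id (UF M)) hphi hc1).
apply: P_ext => Y y; rewrite Fcounit_nat // [in LHS]/Fmap !tmap_id.
by congr (Fmap M N phi Y (Fcounit M Y _)); rewrite /Fmap tmap_id.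
Qed.

Definition sigmaP X (t : tens (C X X) A) : K := eps X (nuP (Ccomod X) X t).

Lemma nuP_cofree (V : lmodType K) X X0 (t : tens V (C X X0)) (a : A) :
  nuP (cofree V X0) X (t (x) a) = tmap id (fun c => nuP (Ccomod X0) X (c (x) a)) t.
Proof.
move: t; apply: tens_ext; try lin.
move=> v c; rewrite tmap_pure //; last by lin.
have := nuP_nat _ _ _ (tpure_comod_hom V X0 v) X (c (x) a).
by rewrite /Fmap tmap_pure //; lin.
Qed.

Lemma nuP_pure (M : comod) X (m : cM M X) (a : A) :
  nuP M X (m (x) a) = tlift (fun n g => sigmaP X (g (x) a) *: n) (crho M X X m).
Proof.
rewrite -[LHS](rho_counit M X) -(nuP_nat _ _ _ (rho_comod_hom M X)).
by rewrite /Fmap tmap_pure ?nuP_cofree ?tlift_tmap //; lin.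
Qed.

Lemma sigmaP_unit X (f : C X X) : sigmaP X (f (x) 1) = eps X f.
Proof. by rewrite /sigmaP nuP_unit. Qed.

Lemma sigmaP_V1 : inV1 K Ob C delta A psi sigmaP.
Proof.
split=> [X | X Y f a]; first by rewrite /sigmaP; lin.
rewrite -(nuP_pure (Ccomod Y)) -[RHS](delta_counitl X Y).
have := proj2 (nuP_comod_hom (Ccomod Y)) X Y (f (x) a); rewrite /= => ->.
by rewrite Frho_pure tlift_tmap //; lin.
Qed.

End Necessity.

Lemma sigma_of_Fpsi_separable : Fpsi_separable K Ob C delta eps A psi ->
  exists sigma : forall X, tens (C X X) A -> K,
    inV1 K Ob C delta A psi sigma /\ (forall X (f : C X X), sigma X (f (x) 1) = eps X f).
Proof.
case=> P [P_hom P_Fmap P_nat]; exists (sigmaP P).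
by split; [exact: sigmaP_V1 | exact: sigmaP_unit].
Qed.

End Entwining.

Theorem theorem4p5 (K : fieldType) (Ob : Type) (C : Ob -> Ob -> lmodType K)
    (delta : forall X Y Z : Ob, C X Z -> tens (C Y Z) (C X Y))
    (eps : forall X : Ob, C X X -> K)
    (A : algType K)
    (psi : forall X Y : Ob, tens (C X Y) A -> tens A (C X Y)) :
  coalg_so K Ob C delta eps ->
  entwining K Ob C delta eps A psi ->
  (Fpsi_separable K Ob C delta eps A psi <->
   exists sigma : forall X : Ob, tens (C X X) A -> K,
     inV1 K Ob C delta A psi sigma /\
     (forall (X : Ob) (f : C X X), sigma X (f (x) 1) = eps X f)).
Proof.
move=> [delta_lin eps_scalar delta_coassoc delta_counitl delta_counitr].
move=> [psi_lin psi_delta psi_mul psi_unit psi_eps]; split.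
- exact: sigma_of_Fpsi_separable.
- by case=> sigma [sigma_V1 sigma_unit]; apply: Fpsi_separable_of_sigma; eassumption.
Qed.
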